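(* Let $n$ be a prime number, let $S\subseteq\{1,2,\ldots,\lfloor n/2\rfloor\}$, let $G=C_n(S)$ be the circulant graph on $S$, and let $\Delta=\Delta(G)$ be its independence complex. Then for every integer $k$ with $1\le k\le\dim\Delta$, the simplicial complex $\Delta^{[k]}$ is connected.
   Context: For $k\in\mathbb{Z}$ write $|k|_n=\min\{|k|,\,n-|k|\}$. The circulant graph $C_n(S)$ has vertex set $\mathbb{Z}_n=\{0,1,\ldots,n-1\}$ and edge set $\{\{i,j\} : |j-i|_n\in S\}$. The independence complex $\Delta(G)$ is the simplicial complex on $V(G)$ whose faces are the independent sets of $G$; the dimension of a face $F$ is $|F|-1$ and $\dim\Delta$ is the maximum dimension of a face. For $0\le k\le\dim\Delta$, $\Delta^{[k]}$ is the pure simplicial complex whose facets are exactly the faces of $\Delta$ of dimension $k$. A simplicial complex is connected if the graph formed by its vertices and its $1$-dimensional faces is connected. *)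

From mathcomp Require Import all_boot.
Set Implicit Arguments. Unset Strict Implicit. Unset Printing Implicit Defensive.

(* Vertex set Z_n is represented by 'I_n. *)

Definition cdist (n : nat) (i j : 'I_n) : nat :=
  let d := maxn i j - minn i j in minn d (n - d).

Definition circ_adj (n : nat) (S : pred nat) (i j : 'I_n) : bool :=
  S (cdist i j).

(* independent sets of C_n(S) = faces of the independence complex *)
Definition indep (n : nat) (S : pred nat) (F : {set 'I_n}) : bool :=
  [forall x in F, forall y in F, ~~ circ_adj S x y].

Definition indep_dim (n : nat) (S : pred nat) : nat :=
  (\max_(F : {set 'I_n} | indep S F) #|F|) - 1.

Definition kface (n : nat) (S : pred nat) (k : nat) (F : {set 'I_n}) : bool :=
  indep S F && (#|F| == k.+1).

Definition skel_vertex (n : nat) (S : pred nat) (k : nat) (v : 'I_n) : bool :=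
  [exists F : {set 'I_n}, kface S k F && (v \in F)].

(* 1-dimensional faces of Delta^[k] (for k >= 1): pairs {u,v} contained in a k-face *)
Definition skel_edge (n : nat) (S : pred nat) (k : nat) : rel 'I_n :=
  fun u v => [exists F : {set 'I_n}, [&& kface S k F, u \in F, v \in F & u != v]].

(* Delta^[k] is connected: its 1-skeleton graph is connected *)
Definition skel_connected (n : nat) (S : pred nat) (k : nat) : Prop :=
  forall u v : 'I_n, skel_vertex S k u -> skel_vertex S k v ->
    connect (skel_edge S k) u v.

(** Rotations [x |-> x + t] of [Z_n] preserve circular distances, so they are
    automorphisms of [C_n(S)], of its independence complex and of every
    [Delta^[k]].  For [k >= 1] a [k]-face contains an edge [{a, b}] of
    [Delta^[k]]; rotating it gives edges [{x, x + d}] for every vertex [x],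
    with [d = b - a].  As [n] is prime, [d] generates [Z_n], so the walk
    [u, u + d, u + 2d, ...] visits every vertex.  The 1-skeleton is therefore
    connected on all of [Z_n]. *)

From mathcomp Require Import all_boot.
From mathcomp Require Import zify.

Set Implicit Arguments.
Unset Strict Implicit.
Unset Printing Implicit Defensive.

Section Faces.
Variables (n : nat) (S : pred nat).

Lemma indepP (F : {set 'I_n}) :
  reflect {in F &, forall x y, ~~ circ_adj S x y} (indep S F).
Proof.
apply: (iffP forall_inP) => [indepF x y Fx Fy | indepF x Fx].
  by move/forall_inP: (indepF x Fx); apply.
by apply/forall_inP => y Fy; apply: indepF.
Qed.

Lemma indep_subset (A B : {set 'I_n}) : A \subset B -> indep S B -> indep S A.
Proof.
move=> /subsetP subAB /indepP indepB; apply/indepP => x y Ax Ay.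
by apply: indepB; apply: subAB.
Qed.

Lemma exists_kface k :
  0 < k -> k <= indep_dim n S -> exists F : {set 'I_n}, kface S k F.
Proof.
rewrite /indep_dim => k_gt0 k_le.
have [F indepF cardF] : exists2 F : {set 'I_n}, indep S F & k < #|F|.
  apply/exists_inP; apply: contraLR k_le => /exists_inPn small; rewrite -ltnNge.
  suff : \max_(F : {set 'I_n} | indep S F) #|F| <= k by lia.
  by apply/bigmax_leqP => F /small; rewrite -leqNgt.
have : 0 < #|[set A : {set 'I_n} | A \subset F & #|A| == k.+1]|.
  by rewrite cards_draws bin_gt0.
case/card_gt0P => G; rewrite inE => /andP [subGF cardG].
by exists G; rewrite /kface cardG (indep_subset subGF).
Qed.

Lemma kface_skel_edge k (F : {set 'I_n}) :
  0 < k -> kface S k F -> exists a b : 'I_n, skel_edge S k a b /\ a != b.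
Proof.
move=> k_gt0 faceF; have : 1 < #|F| by rewrite (eqP (andP faceF).2).
case/card_gt1P => a [b [Fa Fb neq_ab]]; exists a, b; split=> //.
by apply/existsP; exists F; rewrite faceF Fa Fb neq_ab.
Qed.

End Faces.

Section Rotation.
Variable n : nat.
Hypothesis n_gt0 : 0 < n.

Definition rot (t : nat) (x : 'I_n) : 'I_n := Ordinal (ltn_pmod (x + t) n_gt0).

Lemma rot_val t x : val (rot t x) = (x + t) %% n.
Proof. by []. Qed.

Lemma rot0 x : rot 0 x = x.
Proof. by apply: val_inj; rewrite rot_val addn0 modn_small. Qed.

Lemma rot_inj t : injective (rot t).
Proof.
move=> x y /(congr1 val); rewrite !rot_val => /eqP.
by rewrite eqn_modDr !modn_small // => /eqP /val_inj.
Qed.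

Lemma rotD t1 t2 x : rot t1 (rot t2 x) = rot (t2 + t1) x.
Proof. by apply: val_inj; rewrite !rot_val modnDml addnA. Qed.

Lemma rotC t1 t2 x : rot t1 (rot t2 x) = rot t2 (rot t1 x).
Proof. by rewrite !rotD addnC. Qed.

Lemma rot_sub (a x : 'I_n) : rot (x + n - a) a = x.
Proof.
apply: val_inj; rewrite rot_val.
have -> : a + (x + n - a) = x + n by have := ltn_ord a; lia.
by rewrite modnDr modn_small.
Qed.

Lemma cdist_rot t x y : cdist (rot t x) (rot t y) = cdist x y.
Proof.
rewrite /cdist !rot_val -(modnDmr x t) -(modnDmr y t).
have := ltn_pmod t n_gt0; have := ltn_ord x; have := ltn_ord y.
move: (t %% n) => t' ? ? ?.
have mod_lt2n a : a < n + n -> a %% n = if a < n then a else a - n.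
  move=> ?; case: ifP => ?; first by rewrite modn_small.
  by rewrite -[a](@subnK n) ?modnDr ?modn_small //; lia.
by rewrite !mod_lt2n; try lia; case: ifP; case: ifP; lia.
Qed.

Definition rot_invariant (e : rel 'I_n) :=
  forall t x y, e x y -> e (rot t x) (rot t y).

Lemma rot_invariant_step (e : rel 'I_n) (a b : 'I_n) :
  rot_invariant e -> e a b -> forall x, e x (rot (b + n - a) x).
Proof.
move=> e_rot eab x.
by rewrite -{1 2}(rot_sub a x) rotC (rot_sub a b); apply: e_rot.
Qed.

Lemma rot_multiple_surj d (u v : 'I_n) :
  coprime n d -> exists m, v = rot (m * d) u.
Proof.
move=> co_nd; case: (Bezoutl d n_gt0) => c _; rewrite (eqP co_nd).
case/dvdnP=> q cd_eq1; set w := u + n - v.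
exists (c * w); apply: val_inj; rewrite rot_val -(modnDr (u + _)).
have -> : u + c * w * d + n = v + w * (1 + c * d) by have := ltn_ord v; nia.
by rewrite cd_eq1 mulnA addnC modnMDl modn_small.
Qed.

Lemma connect_rot_step (e : rel 'I_n) d :
  coprime n d -> (forall x, e x (rot d x)) -> forall u v, connect e u v.
Proof.
move=> co_nd e_step u v; have [m ->] := rot_multiple_surj u v co_nd.
elim: m => [|m IHm]; first by rewrite rot0.
by apply: connect_trans IHm (connect1 _); rewrite mulSnr -rotD.
Qed.

Lemma coprime_sub_ord (a b : 'I_n) : prime n -> a != b -> coprime n (b + n - a).
Proof.
move=> n_prime neq_ab; rewrite prime_coprime //; apply/negP => /dvdnP [q].
have neq_ab' : nat_of_ord a != b := neq_ab.
by have := ltn_ord a; have := ltn_ord b; case: q => [|[|q]]; lia.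
Qed.

Lemma indep_rot S t F : indep S F -> indep S (rot t @: F).
Proof.
move=> /indepP indepF; apply/indepP => _ _ /imsetP [x Fx ->] /imsetP [y Fy ->].
by rewrite /circ_adj cdist_rot; apply: indepF.
Qed.

Lemma kface_rot S k t F : kface S k F -> kface S k (rot t @: F).
Proof. by case/andP=> indepF cardF; rewrite /kface indep_rot // card_imset //; apply: rot_inj. Qed.

Lemma skel_edge_rot_invariant S k : rot_invariant (skel_edge S k).
Proof.
move=> t x y /existsP [F /and4P [faceF Fx Fy neq_xy]]; apply/existsP; exists (rot t @: F).
by rewrite kface_rot // !imset_f // (inj_eq (@rot_inj t)).
Qed.

End Rotation.


Theorem lemma3p2 (n : nat) (S : pred nat) :
  prime n ->
  (forall s, S s -> 1 <= s <= n./2) ->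
  forall k : nat, 1 <= k <= indep_dim n S -> skel_connected n S k.
Proof.
move=> n_prime _ k /andP [k_gt0 k_le] u v _ _.
have n_gt0 := prime_gt0 n_prime.
have [F faceF] := exists_kface k_gt0 k_le.
have [a [b [edge_ab neq_ab]]] := kface_skel_edge k_gt0 faceF.
apply: (connect_rot_step (coprime_sub_ord n_gt0 n_prime neq_ab)).
exact: rot_invariant_step (@skel_edge_rot_invariant n n_gt0 S k) edge_ab.
Qed.
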